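(* Let $t \geq 1$ be an integer, let $\mathcal{A}_1, \dots, \mathcal{A}_k$ be cross-$t$-intersecting families of finite sets, and let $\mathcal{A} = \bigcup_{i=1}^k \mathcal{A}_i$. Then (i) $\mathcal{A}^{t,+} = \bigcup_{i=1}^k \mathcal{A}_i^{t,+}$; (ii) $\mathcal{A}^{t,-} = \bigcup_{i=1}^k \mathcal{A}_i^{t,-}$; (iii) $|\mathcal{A}^{t,-}| = \sum_{i=1}^k |\mathcal{A}_i^{t,-}|$.
   Context: Families $\mathcal{A}_1, \dots, \mathcal{A}_k$ (not necessarily distinct or non-empty) are cross-$t$-intersecting if for all $i \neq j$ in $\{1,\dots,k\}$, $|A \cap B| \geq t$ for every $A \in \mathcal{A}_i$ and $B \in \mathcal{A}_j$. For a family $\mathcal{B}$, $\mathcal{B}^{t,+} = \{B \in \mathcal{B} : |B \cap C| \geq t \text{ for all } C \in \mathcal{B} \text{ with } C \neq B\}$ and $\mathcal{B}^{t,-} = \mathcal{B} \setminus \mathcal{B}^{t,+}$. *)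

From mathcomp Require Import all_boot.
Set Implicit Arguments. Unset Strict Implicit. Unset Printing Implicit Defensive.

Definition tplus (T : finType) (t : nat) (F : {set {set T}}) : {set {set T}} :=
  [set B in F | [forall C in F, (C != B) ==> (t <= #|B :&: C|)]].

Definition tminus (T : finType) (t : nat) (F : {set {set T}}) : {set {set T}} :=
  F :\: tplus t F.

Definition cross_t_intersecting (T : finType) (t k : nat)
    (Fs : 'I_k -> {set {set T}}) : Prop :=
  forall i j : 'I_k, i != j ->
    forall A B : {set T}, A \in Fs i -> B \in Fs j -> t <= #|A :&: B|.

From mathcomp Require Import all_boot.

Set Implicit Arguments. Unset Strict Implicit. Unset Printing Implicit Defensive.

(* Cross-t-intersection makes the t,+ condition local: a member of A_i meets
   every member of the other families in at least t points, so only A_i itself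
   can witness that it is not in the t,+ part.  In particular a set lying in two
   distinct families is in the t,+ part of both, so the t,- parts of the A_i are
   pairwise disjoint and their sizes add up. *)

Section TPlus.

Variables (T : finType) (t : nat).
Implicit Types (F G : {set {set T}}) (B C : {set T}).

Lemma tplusP F B :
  reflect (B \in F /\ forall C, C \in F -> C != B -> t <= #|B :&: C|)
          (B \in tplus t F).
Proof.
rewrite inE; apply: (iffP andP) => -[BF H]; split=> //.
  by move/forall_inP: H => H C /H/implyP.
by apply/forall_inP => C /H/implyP.
Qed.

Lemma tplus_sub F G B : G \subset F -> B \in G -> B \in tplus t F -> B \in tplus t G.
Proof.
move=> /subsetP sGF BG /tplusP[_ H]; apply/tplusP; split=> // C /sGF; exact: H.
Qed.

Section Cross.

Variables (k : nat) (Fs : 'I_k -> {set {set T}}).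
Hypothesis cross : cross_t_intersecting t Fs.

Lemma shared_mem_tplus i j B :
  i != j -> B \in Fs i -> B \in Fs j -> B \in tplus t (Fs i).
Proof.
move=> nij Bi Bj; apply/tplusP; split=> // C Ci _.
by rewrite setIC; apply: cross nij C B Ci Bj.
Qed.

Lemma tplus_bigcup :
  tplus t (\bigcup_(i < k) Fs i) = \bigcup_(i < k) tplus t (Fs i).
Proof.
apply/setP => B; apply/idP/bigcupP => [BP | [i _ /tplusP[Bi H]]].
  have /tplusP[/bigcupP[i _ Bi] _] := BP.
  by exists i => //; apply: tplus_sub BP; first exact: bigcup_sup.
apply/tplusP; split=> [|C /bigcupP[j _ Cj] nCB]; first by apply/bigcupP; exists i.
have [eij|nij] := eqVneq i j; first by rewrite -eij in Cj; apply: H.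
exact: cross nij B C Bi Cj.
Qed.

Lemma tminus_bigcup :
  tminus t (\bigcup_(i < k) Fs i) = \bigcup_(i < k) tminus t (Fs i).
Proof.
apply/setP => B; rewrite /tminus tplus_bigcup inE.
apply/andP/bigcupP => [[nBP /bigcupP[i _ Bi]] | [i _]].
  exists i => //; rewrite inE Bi andbT.
  by apply: contra nBP => BPi; apply/bigcupP; exists i.
rewrite inE => /andP[nBPi Bi]; split; last by apply/bigcupP; exists i.
apply/bigcupP => -[j _ BPj]; have /tplusP[Bj _] := BPj.
have [eij|nij] := eqVneq i j; first by rewrite eij BPj in nBPi.
by rewrite (shared_mem_tplus nij Bi Bj) in nBPi.
Qed.

Lemma tminus_disjoint i j :
  i != j -> [disjoint tminus t (Fs i) & tminus t (Fs j)].
Proof.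
move=> nij; apply/pred0P => B /=; apply/negP.
rewrite !in_setD => /andP[/andP[nBPi Bi] /andP[_ Bj]].
by rewrite (shared_mem_tplus nij Bi Bj) in nBPi.
Qed.

End Cross.

End TPlus.

Theorem lemma2p1 (T : finType) (t k : nat) (Fs : 'I_k -> {set {set T}}) :
  1 <= t -> cross_t_intersecting t Fs ->
  [/\ tplus t (\bigcup_(i < k) Fs i) = \bigcup_(i < k) tplus t (Fs i),
      tminus t (\bigcup_(i < k) Fs i) = \bigcup_(i < k) tminus t (Fs i) &
      #|tminus t (\bigcup_(i < k) Fs i)| = \sum_(i < k) #|tminus t (Fs i)| ].
Proof.
move=> _ cross; split; [exact: tplus_bigcup | exact: tminus_bigcup |].
rewrite tminus_bigcup // -sum1_card partition_disjoint_bigcup.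
  by apply: eq_bigr => i _; rewrite sum1_card.
exact: tminus_disjoint.
Qed.
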